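(* Let $\mathcal{A}$ be a $\sigma$-algebra on a set $X$ and let $\mathcal{F},\mathcal{G}$ be $\sigma$-algebras on a set $U$. The following are equivalent: (i) $(\mathcal{A}\otimes\mathcal{F})\cap(\mathcal{A}\otimes\mathcal{G})=\mathcal{A}\otimes(\mathcal{F}\cap\mathcal{G})$; (ii) there exist a $\sigma$-algebra $\mathcal{A}_0$ on $X$ and a $\sigma$-algebra $\mathcal{E}$ on $U$ such that $(\mathcal{A}\otimes\mathcal{F})\cap(\mathcal{A}\otimes\mathcal{G})=\mathcal{A}_0\otimes\mathcal{E}$.
   Context: For $\sigma$-algebras $\mathcal{A}$ on $X$ and $\mathcal{F}$ on $U$, $\mathcal{A}\otimes\mathcal{F}$ denotes the product $\sigma$-algebra on $X\times U$, i.e. the smallest $\sigma$-algebra containing all rectangles $A\times F$ with $A\in\mathcal{A}$, $F\in\mathcal{F}$. *)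

From HB Require Import structures.
From mathcomp Require Import all_boot all_order all_algebra.
From mathcomp Require Import all_classical all_reals all_analysis.
Set Implicit Arguments. Unset Strict Implicit. Unset Printing Implicit Defensive.
Local Open Scope classical_set_scope.

Definition prod_sigma (X U : Type) (A : set_system X) (F : set_system U)
  : set_system (X * U) :=
  <<s [set E | exists A1, exists F1, A A1 /\ F F1 /\ E = A1 `*` F1] >>.

From mathcomp Require Import all_boot all_order all_algebra.
From mathcomp Require Import all_classical all_reals all_analysis.
Set Implicit Arguments. Unset Strict Implicit. Unset Printing Implicit Defensive.
Local Open Scope classical_set_scope.

(* If A0 ⊗ E lies in A ⊗ F and X, U are inhabited, then A0 ⊆ A and E ⊆ F:
   a rectangle A1 × U of A0 ⊗ E lies in A ⊗ F, its section at any point of U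
   is A1, and every section of a set of A ⊗ F lies in A (the sets whose
   section lies in A form a σ-algebra containing the rectangles); likewise
   for X × E1.  Hence (ii) forces A0 ⊗ E ⊆ A ⊗ (F ∩ G), the reverse inclusion
   being monotonicity.  If X × U is empty, every σ-algebra on it is {∅}. *)

Lemma sigma_algebraI (T : Type) (D : set T) (F G : set_system T) :
  sigma_algebra D F -> sigma_algebra D G -> sigma_algebra D (F `&` G).
Proof.
move=> [F0 FD FU] [G0 GD GU]; split=> //.
- by move=> S [/FD ? /GD ?].
- by move=> S SFG; split; [apply: FU => n; case: (SFG n)|apply: GU => n; case: (SFG n)].
Qed.

Section product_sigma_algebra.
Variables (X U : Type).
Implicit Types (A : set_system X) (F : set_system U).

Lemma sigma_algebra_prod_sigma A F : sigma_algebra setT (prod_sigma A F).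
Proof. exact: smallest_sigma_algebra. Qed.

Lemma prod_sigma_rect A F (A1 : set X) (F1 : set U) :
  A A1 -> F F1 -> prod_sigma A F (A1 `*` F1).
Proof. by move=> AA1 FF1; apply: sub_sigma_algebra; exists A1, F1. Qed.

Lemma prod_sigmaS A A' F F' :
  A `<=` A' -> F `<=` F' -> prod_sigma A F `<=` prod_sigma A' F'.
Proof.
move=> AA' FF'; apply: smallest_sub; first exact: sigma_algebra_prod_sigma.
move=> _ [A1 [F1 [AA1 [FF1 ->]]]].
by apply: prod_sigma_rect; [apply: AA'|apply: FF'].
Qed.

Lemma prod_sigma_xsection A F (x : X) (S : set (X * U)) :
  sigma_algebra setT F -> prod_sigma A F S -> F (xsection S x).
Proof.
move=> sF; rewrite xsectionE -[_ @^-1` S]setTI; move: S.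
apply: smallest_sub; first exact: sigma_algebra_image.
move=> _ [A1 [F1 [_ [FF1 ->]]]]; rewrite /image_set_system /= setTI -xsectionE.
have [xA1|xA1] := boolP (x \in A1); first by rewrite in_xsectionX.
by rewrite notin_xsectionX //; case: sF.
Qed.

Lemma prod_sigma_ysection A F (u : U) (S : set (X * U)) :
  sigma_algebra setT A -> prod_sigma A F S -> A (ysection S u).
Proof.
move=> sA; rewrite ysectionE -[_ @^-1` S]setTI; move: S.
apply: smallest_sub; first exact: sigma_algebra_image.
move=> _ [A1 [F1 [AA1 [_ ->]]]]; rewrite /image_set_system /= setTI -ysectionE.
have [uF1|uF1] := boolP (u \in F1); first by rewrite in_ysectionX.
by rewrite notin_ysectionX //; case: sA.
Qed.

Lemma prod_sigma_sub_fst A A0 F E (u : U) :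
  sigma_algebra setT A -> sigma_algebra setT E ->
  prod_sigma A0 E `<=` prod_sigma A F -> A0 `<=` A.
Proof.
move=> sA /sigma_algebra_dynkin/dynkinT ET sub A1 A0A1.
rewrite -(@in_ysectionX _ _ A1 setT u) ?in_setT //.
apply: (prod_sigma_ysection _ sA).
by apply: sub; apply: prod_sigma_rect.
Qed.

Lemma prod_sigma_sub_snd A A0 F E (x : X) :
  sigma_algebra setT F -> sigma_algebra setT A0 ->
  prod_sigma A0 E `<=` prod_sigma A F -> E `<=` F.
Proof.
move=> sF /sigma_algebra_dynkin/dynkinT A0T sub E1 EE1.
rewrite -(@in_xsectionX _ _ setT E1 x) ?in_setT //.
apply: (prod_sigma_xsection _ sF).
by apply: sub; apply: prod_sigma_rect.
Qed.

End product_sigma_algebra.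

Theorem lemma2p4 (X U : Type) (A : set_system X) (F G : set_system U)
  (hA : sigma_algebra setT A) (hF : sigma_algebra setT F)
  (hG : sigma_algebra setT G) :
  (prod_sigma A F `&` prod_sigma A G = prod_sigma A (F `&` G)) <->
  (exists (A0 : set_system X) (E : set_system U),
      sigma_algebra setT A0 /\ sigma_algebra setT E /\
      prod_sigma A F `&` prod_sigma A G = prod_sigma A0 E).
Proof.
split=> [AFG|[A0 [E [hA0 [hE AFG]]]]].
  by exists A, (F `&` G); split=> //; split=> //; apply: sigma_algebraI.
apply/seteqP; split; last first.
  by move=> S FGS; split; apply: prod_sigmaS FGS => // ? [].
rewrite AFG.
have [[[x u] _]|no_point] := pselect (exists p : X * U, True); last first.
  move=> S _; have -> : S = set0.
    by apply/seteqP; split=> // p _; apply: no_point; exists p.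
  by case: (sigma_algebra_prod_sigma A (F `&` G)).
have subF : prod_sigma A0 E `<=` prod_sigma A F by rewrite -AFG => S [].
have subG : prod_sigma A0 E `<=` prod_sigma A G by rewrite -AFG => S [].
apply: prod_sigmaS; first exact: prod_sigma_sub_fst u hA hE subF.
rewrite subsetI; split.
- exact: (prod_sigma_sub_snd x hF hA0 subF).
- exact: (prod_sigma_sub_snd x hG hA0 subG).
Qed.
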